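(* Let $\Omega\subset\mathbb{R}^n$ be a nonempty closed convex set and $f:\mathbb{R}^n\to\mathbb{R}$ differentiable over $\Omega$ such that (i) $f(\bm{x})\ge\underline{f}$ for all $\bm{x}\in\Omega$, (ii) $\|\nabla f(\bm{x})-\nabla f(\bm{y})\|_2\le L\|\bm{x}-\bm{y}\|_2$ for all $\bm{x},\bm{y}\in\Omega$ for some $L>0$, and (iii) the relaxation sequence $\{\omega_k\}\subset[0,\infty)$ satisfies $\sum_{k=0}^\infty\omega_k<\infty$. Suppose $\{\bm{x}_k\}$ is generated by either IGPM without line search or IGPM with line search (described in the context). Then \[\lim_{k\to\infty}E(\bm{x}_k;\beta)=0,\qquad\text{where } E(\bm{x};\beta):=\|\bm{x}-\mathcal{P}_\Omega(\bm{x}-\beta\nabla f(\bm{x}))\|_2^2 .\]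
   Context: $\mathcal{P}_\Omega$ is Euclidean projection onto $\Omega$. For $\bm{x}_k\in\Omega$ write $\bm{g}_k=\nabla f(\bm{x}_k)$, $\bm{v}_k=\bm{x}_k-\beta\bm{g}_k$ for a fixed $\beta>0$, and define $p(\bm{z};\bm{x}_k)=\tfrac12\|\bm{z}-\bm{v}_k\|_2^2+\delta_\Omega(\bm{z})$ ($\delta_\Omega$ the $0/+\infty$ indicator of $\Omega$), $\Delta p(\bm{z};\bm{x}_k)=p(\bm{x}_k;\bm{x}_k)-p(\bm{z};\bm{x}_k)$, and $q(\bm{u};\bm{x}_k)=-\tfrac12\|\bm{u}-\bm{v}_k\|_2^2-\delta_\Omega^*(\bm{u})+\tfrac12\|\bm{v}_k\|_2^2$ with $\delta^*_\Omega(\bm{u})=\sup_{\bm{x}\in\Omega}\langle\bm{x},\bm{u}\rangle$. An inexact projection at iteration $k$ is a point $\bm{z}_k\in\Omega$ with $\Delta p(\bm{z}_k;\bm{x}_k)\ge0$ together with some dual point $\bm{u}_k$ such that $\frac{p(\bm{x}_k;\bm{x}_k)-p(\bm{z}_k;\bm{x}_k)+\omega_k}{p(\bm{x}_k;\bm{x}_k)-q(\bm{u}_k;\bm{x}_k)+\omega_k}\ge\gamma$, where $0<\gamma<1$. IGPM without line search: $0<\beta\le1/L$, $\bm{x}_0\in\Omega$, and $\bm{x}_{k+1}=\bm{z}_k$ for all $k$. IGPM with line search: fix $0<\eta<1$, $0<\alpha\le1$, $\beta>0$, $0<\theta<1$, $\bm{x}_0\in\Omega$; set $\bm{d}_k=\bm{z}_k-\bm{x}_k$,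 let $\alpha_k$ be the largest value in $\{\theta^i\alpha: i=0,1,2,\dots\}$ with $f(\bm{x}_k+\alpha_k\bm{d}_k)\le f(\bm{x}_k)+\eta\alpha_k\bm{g}_k^T\bm{d}_k$, and set $\bm{x}_{k+1}=\bm{x}_k+\alpha_k\bm{d}_k$. The algorithms are considered as generating infinite sequences. *)

From HB Require Import structures.
From mathcomp Require Import all_boot all_order all_algebra.
From mathcomp Require Import all_classical all_reals all_analysis.
Set Implicit Arguments. Unset Strict Implicit. Unset Printing Implicit Defensive.
Import Order.TTheory GRing.Theory Num.Theory.
Import numFieldNormedType.Exports.
Local Open Scope classical_set_scope.
Local Open Scope ring_scope.

Section IGPM.
Variables (R : realType) (n : nat).
Notation vec := 'rV[R]_n.

Definition dot (u v : vec) : R := \sum_(i < n) u ord0 i * v ord0 i.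
Definition norm2 (u : vec) : R := Num.sqrt (dot u u).

Definition is_proj (Om : set vec) (v p : vec) : Prop :=
  Om p /\ forall z, Om z -> norm2 (p - v) <= norm2 (z - v).

(* P_Om(v): the (unique, for nonempty closed convex Om) nearest point *)
Definition proj (Om : set vec) (v : vec) : vec := xget 0 [set p | is_proj Om v p].

(* E(x; beta) = || x - P_Om(x - beta grad f(x)) ||_2^2, grad f given by g *)
Definition Eres (Om : set vec) (g : vec -> vec) (beta : R) (x : vec) : R :=
  norm2 (x - proj Om (x - beta *: g x)) ^+ 2.

(* p(z; x_k) = 1/2 ||z - v_k||^2 + delta_Om(z), v_k = x_k - beta g_k *)
Definition pfun (Om : set vec) (g : vec -> vec) (beta : R) (xk z : vec) : \bar R :=
  if `[< Om z >] then ((2^-1) * norm2 (z - (xk - beta *: g xk)) ^+ 2)%:E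
  else +oo%E.

Definition supp (Om : set vec) (u : vec) : \bar R :=
  ereal_sup [set (dot x u)%:E | x in Om].

Definition qfun (Om : set vec) (g : vec -> vec) (beta : R) (xk u : vec) : \bar R :=
  let v := xk - beta *: g xk in
  ((- (2^-1 * norm2 (u - v) ^+ 2))%:E - supp Om u + (2^-1 * norm2 v ^+ 2)%:E)%E.

(* inexact projection condition at iteration k (ratio condition written
   multiplicatively) *)
Definition inexact_proj (Om : set vec) (g : vec -> vec) (beta gamma om : R)
    (xk zk uk : vec) : Prop :=
  Om zk /\
  (0 <= pfun Om g beta xk xk - pfun Om g beta xk zk)%E /\
  (gamma%:E * (pfun Om g beta xk xk - qfun Om g beta xk uk + om%:E)
     <= pfun Om g beta xk xk - pfun Om g beta xk zk + om%:E)%E.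

Definition IGPM_noLS (Om : set vec) (g : vec -> vec) (L beta gamma : R)
    (om : nat -> R) (x z u : nat -> vec) : Prop :=
  0 < beta <= L^-1 /\ Om (x 0%N) /\
  forall k, inexact_proj Om g beta gamma (om k) (x k) (z k) (u k) /\
            x k.+1 = z k.

Definition armijo (f : vec -> R) (g : vec -> vec) (eta : R) (xk dk : vec) (a : R) :=
  f (xk + a *: dk) <= f xk + eta * a * dot (g xk) dk.

Definition IGPM_LS (Om : set vec) (f : vec -> R) (g : vec -> vec)
    (eta alpha beta theta gamma : R)
    (om : nat -> R) (x z u : nat -> vec) : Prop :=
  0 < eta < 1 /\ 0 < alpha <= 1 /\ 0 < beta /\ 0 < theta < 1 /\ Om (x 0%N) /\
  forall k, inexact_proj Om g beta gamma (om k) (x k) (z k) (u k) /\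
    exists i : nat,
      armijo f g eta (x k) (z k - x k) (theta ^+ i * alpha) /\
      (forall j : nat, (j < i)%N -> ~ armijo f g eta (x k) (z k - x k) (theta ^+ j * alpha)) /\
      x k.+1 = x k + (theta ^+ i * alpha) *: (z k - x k).

End IGPM.

From Pilot Require Import Defs.
From HB Require Import structures.
From mathcomp Require Import all_boot all_order all_algebra.
From mathcomp Require Import all_classical all_reals all_analysis.
From mathcomp Require Import ring lra.
Set Implicit Arguments. Unset Strict Implicit. Unset Printing Implicit Defensive.
Import Order.TTheory GRing.Theory Num.Theory.
Import numFieldNormedType.Exports.
Local Open Scope classical_set_scope.
Local Open Scope ring_scope.

(* At an inexact projection step, with v_k = x_k - beta g_k and P = P_Om(v_k),
   the obtuse-angle property of P, weak duality q <= p and the inexactness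
   test give
     E(x_k) <= |x_k - v_k|^2 - |P - v_k|^2 = 2 (p(x_k) - p(P))
            <= 2 (p(x_k) - q(u_k)) <= 2/gamma (Dp_k + om_k),
   where Dp_k = p(x_k) - p(z_k) >= 0.  The descent lemma shows that both
   variants decrease f by at least C Dp_k for a fixed C > 0: without line
   search because beta <= 1/L, with line search because backtracking stops at
   a step at least min(alpha, theta (1 - eta) / (beta L)), below which the
   Armijo test always succeeds.  As f is bounded below on Om, sum Dp_k is
   finite, so Dp_k -> 0; also om_k -> 0, and E(x_k) is squeezed to 0. *)

Section NonnegativeSeries.
Variable R : realType.
Implicit Types h : nat -> R.

Lemma cvg0_of_bounded_partial_sums h M : (forall k, 0 <= h k) ->
  (forall N, \sum_(0 <= k < N) h k <= M) -> h @ \oo --> 0.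
Proof.
move=> h_ge0 bounded; apply: cvg_series_cvg_0; apply: nondecreasing_is_cvgn.
  by apply: nondecreasing_series => k _ _; exact: h_ge0.
by exists M => _ [N _ <-]; exact: bounded.
Qed.

Lemma cvg0_of_nneseries_lt_pinfty h : (forall k, 0 <= h k) ->
  (\sum_(0 <= k <oo) (h k)%:E < +oo)%E -> h @ \oo --> 0.
Proof.
move=> h_ge0 finite.
have partial_le N : (\sum_(0 <= k < N) (h k)%:E <= \sum_(0 <= k <oo) (h k)%:E)%E.
  by apply: nneseries_lim_ge => k _ _; rewrite lee_fin.
move: finite partial_le; case: (\sum_(0 <= k <oo) _)%E => [s| |] // _ partial_le.
  apply: (@cvg0_of_bounded_partial_sums _ s) => // N.
  by have := partial_le N; rewrite sumEFin lee_fin.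
by have := partial_le 0%N; rewrite big_geq.
Qed.

Lemma cvg0_of_telescoping_bound h (a : nat -> R) C m : (forall k, 0 <= h k) -> 0 < C ->
  (forall k, C * h k <= a k - a k.+1) -> (forall k, m <= a k) -> h @ \oo --> 0.
Proof.
move=> h_ge0 C_gt0 step a_ge; apply: (@cvg0_of_bounded_partial_sums _ ((a 0%N - m) / C)) => //.
move=> N; rewrite ler_pdivlMr // mulr_suml.
have telescope : \sum_(0 <= k < N) h k * C <= a 0%N - a N.
  elim: N => [|N IH]; first by rewrite big_geq // subrr.
  by rewrite big_nat_recr //=; have := step N; lra.
by have := a_ge N; lra.
Qed.

End NonnegativeSeries.

Section Euclidean.
Variables (R : realType) (n : nat).
Notation vec := 'rV[R]_n.
Implicit Types (u v w : vec).

Lemma dotC u v : dot u v = dot v u.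
Proof. by apply: eq_bigr => i _; rewrite mulrC. Qed.

Lemma dotDl u v w : dot (u + v) w = dot u w + dot v w.
Proof. by rewrite /dot -big_split; apply: eq_bigr => i _; rewrite mxE mulrDl. Qed.

Lemma dotZl (a : R) u w : dot (a *: u) w = a * dot u w.
Proof. by rewrite /dot mulr_sumr; apply: eq_bigr => i _; rewrite mxE mulrA. Qed.

Lemma dotNl u w : dot (- u) w = - dot u w.
Proof. by rewrite -scaleN1r dotZl mulN1r. Qed.

Lemma dotBl u v w : dot (u - v) w = dot u w - dot v w.
Proof. by rewrite dotDl dotNl. Qed.

Lemma dotDr u v w : dot w (u + v) = dot w u + dot w v.
Proof. by rewrite dotC dotDl !(dotC w). Qed.

Lemma dotZr (a : R) u w : dot w (a *: u) = a * dot w u.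
Proof. by rewrite dotC dotZl dotC. Qed.

Lemma dotNr u w : dot w (- u) = - dot w u.
Proof. by rewrite !(dotC w) dotNl. Qed.

Lemma dotBr u v w : dot w (u - v) = dot w u - dot w v.
Proof. by rewrite dotDr dotNr. Qed.

Lemma dot_ge0 u : 0 <= dot u u.
Proof. by apply: sumr_ge0 => i _; rewrite -expr2 sqr_ge0. Qed.

Lemma norm2_ge0 u : 0 <= norm2 u.
Proof. exact: sqrtr_ge0. Qed.

Lemma norm2_sqr u : norm2 u ^+ 2 = dot u u.
Proof. by rewrite /norm2 sqr_sqrtr // dot_ge0. Qed.

Lemma ler_norm2 u v : (norm2 u <= norm2 v) = (dot u u <= dot v v).
Proof. by rewrite /norm2 ler_sqrt // dot_ge0. Qed.

Lemma sqr_coord_le_dot u (i : 'I_n) : u ord0 i ^+ 2 <= dot u u.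
Proof.
rewrite /dot (bigD1 i) //= -expr2 lerDl.
by apply: sumr_ge0 => j _; rewrite -expr2 sqr_ge0.
Qed.

Lemma dot_AMGM (s : R) u v : 0 < s -> 2 * dot u v <= s * dot u u + s^-1 * dot v v.
Proof.
move=> s_gt0; have := dot_ge0 (s *: u - v).
rewrite !(dotBl, dotBr, dotZl, dotZr) (dotC v u) => sq_ge0.
rewrite -(ler_pM2l s_gt0) mulrDr mulrA [s * (s^-1 * _)]mulrA.
rewrite mulfV ?gt_eqF // mul1r; nra.
Qed.

Lemma continuous_sqr_dist v : continuous (fun z : vec => dot (z - v) (z - v)).
Proof.
apply: continuous_big => // [|i _]; first exact: add_continuous.
have coordB : continuous (fun z : vec => (z - v) ord0 i).
  move=> z; rewrite (_ : (fun _ => _) = (fun z : vec => z ord0 i) - cst (v ord0 i)).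
    by apply: continuousB; [exact: coord_continuous | exact: cst_continuous].
  by apply: funext => w; rewrite !mxE.
by move=> z; exact: continuousM (coordB z) (coordB z).
Qed.

Lemma convex_set_segment (Om : set vec) u v (t : R) : convex_set Om ->
  Om u -> Om v -> 0 <= t <= 1 -> Om (u + t *: (v - u)).
Proof.
move=> convOm Ou Ov /andP[t_ge0 t_le1].
have := convOm v u (Itv01 t_ge0 t_le1) (mem_set Ov) (mem_set Ou).
by rewrite inE /conv /= /unstable.onem scalerBl scale1r scalerBr addrCA.
Qed.

End Euclidean.

Section Projection.
Variables (R : realType) (n : nat) (Om : set 'rV[R]_n).
Notation vec := 'rV[R]_n.

Lemma is_proj_exists v : Om !=set0 -> closed Om -> exists p, is_proj Om v p.
Proof.
move=> [y0 Oy0] closedOm.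
pose F z := dot (z - v) (z - v); pose r := Num.sqrt (F y0).
pose box := [set z : vec | forall i, `[v ord0 i - r, v ord0 i + r]%classic (z ord0 i)].
have sublevel_box z : F z <= F y0 -> box z.
  move=> Fz i /=; rewrite in_itv /= -ler_distl -sqrtr_sqr ler_wsqrtr //.
  by apply: le_trans Fz; have := sqr_coord_le_dot (z - v) i; rewrite !mxE.
have compact_box : compact box.
  by apply: (@rV_compact _ _ (fun i => `[v ord0 i - r, v ord0 i + r]%classic)) => i;
    exact: segment_compact.
have nonempty : (box `&` Om) !=set0 by exists y0; split => //; exact: sublevel_box.
have [p] := EVT_min_rV nonempty (compact_closedI compact_box closedOm)
  (continuous_subspaceT (@continuous_sqr_dist _ _ v)).
rewrite inE => -[_ Op] p_min; exists p; split => // w Ow.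
have Fp_le : F p <= F y0 by apply: p_min; rewrite inE; split => //; exact: sublevel_box.
rewrite ler_norm2; have [Fw_le|/ltW] := leP (F w) (F y0); last exact: le_trans.
by apply: p_min; rewrite inE; split => //; exact: sublevel_box.
Qed.

Lemma proj_is_proj v : Om !=set0 -> closed Om -> is_proj Om v (Defs.proj Om v).
Proof. by move=> Om0 closedOm; apply: xgetPex; exact: is_proj_exists. Qed.

Lemma is_proj_obtuse v p y : convex_set Om -> is_proj Om v p -> Om y ->
  0 <= dot (p - v) (y - p).
Proof.
move=> convOm [Op p_min] Oy.
set a := dot (p - v) (y - p); set b := dot (y - p) (y - p).
have segment_ge t : 0 <= t <= 1 -> 0 <= 2 * t * a + t ^+ 2 * b.
  move=> t01; have := p_min _ (convex_set_segment convOm Op Oy t01).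
  rewrite ler_norm2 addrAC /a /b; move: (p - v) (y - p) => P D.
  by rewrite !(dotDl, dotDr, dotZl, dotZr) (dotC D P) => ?; nra.
rewrite leNgt; apply/negP => a_lt0.
have b_ge0 : 0 <= b by exact: dot_ge0.
have ba_gt0 : 0 < b - a by lra.
pose t := - a / (b - a).
have t_gt0 : 0 < t by rewrite divr_gt0 // oppr_gt0.
have tE : t * (b - a) = - a by rewrite mulrVK ?unitfE ?gt_eqF.
have t_le1 : t <= 1 by rewrite ler_pdivrMr // mul1r; lra.
have := segment_ge t; rewrite ltW //= t_le1 => /(_ isT); nra.
Qed.

Lemma is_proj_sqr_dist_le v p y : convex_set Om -> is_proj Om v p -> Om y ->
  dot (y - p) (y - p) <= dot (y - v) (y - v) - dot (p - v) (p - v).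
Proof.
move=> convOm proj_p Oy; have := is_proj_obtuse convOm proj_p Oy.
have -> : y - v = (y - p) + (p - v) by rewrite addrA subrK.
move: (p - v) (y - p) => P D; rewrite !(dotDl, dotDr) (dotC D P); lra.
Qed.

End Projection.

Section InexactProjection.
Variables (R : realType) (n : nat) (Om : set 'rV[R]_n) (g : 'rV[R]_n -> 'rV[R]_n).
Variable beta : R.
Notation vec := 'rV[R]_n.
Implicit Types (xk zk : vec).

(* The paper's Delta p(z_k; x_k), real-valued since p is finite on Om. *)
Definition Dp xk zk : R :=
  let vk := xk - beta *: g xk in
  2^-1 * dot (xk - vk) (xk - vk) - 2^-1 * dot (zk - vk) (zk - vk).

Lemma DpE xk zk :
  Dp xk zk = - beta * dot (g xk) (zk - xk) - 2^-1 * dot (zk - xk) (zk - xk).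
Proof.
rewrite /Dp /=.
have -> : xk - (xk - beta *: g xk) = beta *: g xk by rewrite opprB addrC subrK.
have -> : zk - (xk - beta *: g xk) = (zk - xk) + beta *: g xk.
  by rewrite opprB addrA addrAC.
move: (zk - xk) => d; rewrite !(dotDl, dotDr, dotZl, dotZr) (dotC d (g xk)).
lra.
Qed.

Lemma pfunE xk z : Om z ->
  pfun Om g beta xk z = (2^-1 * dot (z - (xk - beta *: g xk)) (z - (xk - beta *: g xk)))%:E.
Proof. by move=> Oz; rewrite /pfun asboolT // norm2_sqr. Qed.

Lemma qfun_le_pfun xk u z : Om z -> (qfun Om g beta xk u <= pfun Om g beta xk z)%E.
Proof.
move=> Oz; rewrite pfunE // /qfun !norm2_sqr.
have : ((dot z u)%:E <= supp Om u)%E by apply: ereal_sup_ubound; exists z.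
case: (supp Om u) => [s| |] //= => [|_]; last by rewrite leNye.
rewrite -!EFinD !lee_fin; move: (xk - beta *: g xk) => vk zu_le.
have := dot_ge0 (z + u - vk).
rewrite !(dotDl, dotDr, dotNl, dotNr) (dotC u z) (dotC vk z) (dotC vk u); lra.
Qed.

Lemma inexact_proj_Dp_ge0 gamma om xk zk uk : Om xk ->
  inexact_proj Om g beta gamma om xk zk uk -> 0 <= Dp xk zk.
Proof. by move=> Oxk [Ozk [+ _]]; rewrite !pfunE // -EFinB lee_fin. Qed.

Lemma Eres_le_Dp gamma om xk zk uk :
  Om !=set0 -> closed Om -> convex_set Om -> 0 < gamma -> 0 <= om -> Om xk ->
  inexact_proj Om g beta gamma om xk zk uk ->
  Eres Om g beta xk <= 2 / gamma * (Dp xk zk + om).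
Proof.
move=> Om0 closedOm convOm gamma_gt0 om_ge0 Oxk [Ozk [_ inexact]].
have proj_p := proj_is_proj (xk - beta *: g xk) Om0 closedOm.
have dist_le := is_proj_sqr_dist_le convOm proj_p Oxk.
have := qfun_le_pfun xk uk proj_p.1; rewrite pfunE; last exact: proj_p.1.
move: inexact dist_le; rewrite /Eres norm2_sqr !pfunE // /Dp /=; clear proj_p.
move: (Defs.proj Om (xk - beta *: g xk)) => p; move: (xk - beta *: g xk) => vk.
case: (qfun Om g beta xk uk) => [q| |] /= inexact dist_le.
- rewrite -!EFinB -!EFinD -EFinM !lee_fin in inexact * => q_le.
  rewrite mulrAC ler_pdivlMr //; nra.
- by rewrite leye_eq.
- move: inexact; rewrite addey // addye // mulry gtr0_sg // mul1e -!EFinD.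
  by rewrite leye_eq.
Qed.

End InexactProjection.

Lemma backtracking_step_in01 (R : realType) (alpha theta : R) (i : nat) :
  0 < alpha <= 1 -> 0 < theta < 1 -> 0 < theta ^+ i * alpha <= 1.
Proof.
move=> /andP[alpha_gt0 alpha_le1] /andP[theta_gt0 theta_lt1].
have pow_le1 : theta ^+ i <= 1 by rewrite exprn_ile1 ?ltW.
by rewrite mulr_gt0 ?exprn_gt0 //= -[1]mul1r ler_pM ?exprn_ge0 // ltW.
Qed.

Lemma armijo_decrease (R : realType) (n : nat) (f : 'rV[R]_n -> R) g eta beta a c xk zk :
  0 < eta -> 0 < beta -> 0 <= c <= a -> 0 <= Dp g beta xk zk ->
  armijo f g eta xk (zk - xk) a ->
  eta * c / beta * Dp g beta xk zk <= f xk - f (xk + a *: (zk - xk)).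
Proof.
move=> eta_gt0 beta_gt0 /andP[c_ge0 c_le_a]; rewrite DpE /armijo.
have := dot_ge0 (zk - xk).
move: (dot (zk - xk) _) (dot (g xk) _) => dd gd dd_ge0 Dp_ge0 armijo_a.
have gd_le0 : gd <= 0 by nra.
have -> : eta * c / beta * (- beta * gd - 2^-1 * dd)
    = - (eta * c * gd) - 2^-1 * (eta * c / beta * dd) by field; rewrite gt_eqF.
have : 0 <= eta * c / beta * dd.
  by rewrite !mulr_ge0 // ?invr_ge0 ltW.
have : 0 <= eta * (a - c) * - gd.
  by rewrite !mulr_ge0 ?subr_ge0 ?oppr_ge0 // ltW.
lra.
Qed.

Lemma is_derive_along (R : realType) (n : nat) (f : 'rV[R]_n -> R) (g : 'rV[R]_n -> 'rV[R]_n)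
    (x d : 'rV[R]_n) (t : R) :
  differentiable f (x + t *: d) -> (forall w, 'd f (x + t *: d) w = dot (g (x + t *: d)) w) ->
  is_derive t 1 (fun s : R => f (x + s *: d)) (dot (g (x + t *: d)) d).
Proof.
move=> df dfE.
have quotE : (fun h : R => h^-1 *: (((fun s => f (x + s *: d)) \o shift t) (h *: 1) - f (x + t *: d)))
    = (fun h : R => h^-1 *: ((f \o shift (x + t *: d)) (h *: d) - f (x + t *: d))).
  by apply: funext => h /=; rewrite [_%:A]mulr1 scalerDl addrCA.
apply: DeriveDef; first by rewrite /derivable quotE; exact: diff_derivable.
by rewrite /derive quotE -dfE -deriveE.
Qed.

Section SmoothObjective.
Variables (R : realType) (n : nat) (Om : set 'rV[R]_n).
Variables (f : 'rV[R]_n -> R) (g : 'rV[R]_n -> 'rV[R]_n) (L : R).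
Hypothesis convOm : convex_set Om.
Hypothesis grad_f : forall y, Om y -> differentiable f y /\ forall v, 'd f y v = dot (g y) v.
Hypothesis lipschitz_g :
  forall y y', Om y -> Om y' -> norm2 (g y - g y') <= L * norm2 (y - y').
Hypothesis L_gt0 : 0 < L.

Lemma dot_grad_sub_le y y' : Om y -> Om y' ->
  dot (g y - g y') (y - y') <= L * dot (y - y') (y - y').
Proof.
move=> Oy Oy'; have := lipschitz_g Oy Oy'.
have := @dot_AMGM _ _ L^-1 (g y - g y') (y - y'); rewrite invrK invr_gt0 => /(_ L_gt0).
rewrite -!norm2_sqr; have := norm2_ge0 (g y - g y'); have := norm2_ge0 (y - y').
move: (norm2 (y - y')) (norm2 (g y - g y')) (dot _ _) => a b w a_ge0 b_ge0 amgm b_le.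
have : L^-1 * b ^+ 2 <= L * a ^+ 2 by rewrite ler_pdivrMl //; nra.
lra.
Qed.

(* psi(s) = f(x + s d) - s <g x, d> - s^2 L/2 |d|^2 has derivative
   <g(x + s d) - g x, d> - s L |d|^2 <= 0 on ]0, 1[ by dot_grad_sub_le. *)
Lemma descent_lemma x y : Om x -> Om y ->
  f y <= f x + dot (g x) (y - x) + L / 2 * dot (y - x) (y - x).
Proof.
move=> Ox Oy; set d := y - x; set c1 := dot (g x) d; set c2 := L / 2 * dot d d.
have O_seg t : 0 <= t <= 1 -> Om (x + t *: d) := convex_set_segment convOm Ox Oy.
pose psi := (fun s : R => f (x + s *: d)) - c1 \*: (@id R) - c2 \*: ((@id R : R -> R) ^+ 2).
pose dpsi t := dot (g (x + t *: d)) d - c1 - 2 * c2 * t.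
have psi_deriv (t : R) : 0 <= t <= 1 -> is_derive t 1 psi (dpsi t).
  move=> t01; have [df dfE] := grad_f (O_seg t t01).
  apply: is_derive_eq; first by do 2 apply: is_deriveB; exact: is_derive_along.
  by rewrite /dpsi /= /GRing.scale /= !mulr1 expr1; ring.
have dpsi_le0 (t : R) : 0 < t < 1 -> dpsi t <= 0.
  move=> /andP[t_gt0 t_lt1]; have t01 : 0 <= t <= 1 by rewrite !ltW.
  have := dot_grad_sub_le (O_seg t t01) Ox; rewrite addrAC subrr add0r.
  rewrite !dotZr dotZl dotBl -/c1 /dpsi /c2 => le.
  rewrite -(pmulr_rle0 _ t_gt0); nra.
have [c /[!in_itv] /= c01 psi10] : exists2 c, c \in `]0, 1[ & psi 1 - psi 0 = dpsi c * (1 - 0).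
  apply: MVT => [|s /[!in_itv] /= /andP[s_gt0 s_lt1]|]; first exact: ltr01.
    by apply: psi_deriv; rewrite !ltW.
  apply: derivable_within_continuous => s /[!in_itv] /= s01.
  by have [] := psi_deriv s s01.
have psiE (s : R) : psi s = f (x + s *: d) - c1 * s - c2 * s ^+ 2 by [].
have xdE : x + 1 *: d = y by rewrite scale1r addrC subrK.
rewrite subr0 mulr1 in psi10; have := dpsi_le0 c c01; rewrite -psi10.
by rewrite !psiE xdE scale0r addr0 expr0n expr1n /=; lra.
Qed.

Lemma full_step_decrease beta xk zk : 0 < beta -> beta <= L^-1 -> Om xk -> Om zk ->
  beta^-1 * Dp g beta xk zk <= f xk - f zk.
Proof.
move=> beta_gt0 beta_le Oxk Ozk.
have := descent_lemma Oxk Ozk.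
have Lbeta_le1 : L * beta <= 1 by rewrite -(mulfV (lt0r_neq0 L_gt0)) ler_pM2l.
rewrite DpE; have := dot_ge0 (zk - xk).
move: (dot (zk - xk) _) (dot (g xk) _) => dd gd dd_ge0 descent.
rewrite ler_pdivrMl //.
have := ler_wpM2l (ltW beta_gt0) descent.
have : 0 <= (1 - L * beta) * dd by rewrite mulr_ge0 ?subr_ge0.
nra.
Qed.

Lemma armijo_small_step eta beta a xk zk : 0 < beta -> Om xk -> Om zk ->
  0 <= Dp g beta xk zk -> 0 <= a <= 1 -> a * (beta * L) <= 1 - eta ->
  armijo f g eta xk (zk - xk) a.
Proof.
move=> beta_gt0 Oxk Ozk Dp_ge0 a01 small.
have Oy := convex_set_segment convOm Oxk Ozk a01.
have := descent_lemma Oxk Oy.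
have -> : xk + a *: (zk - xk) - xk = a *: (zk - xk) by rewrite addrAC subrr add0r.
rewrite /armijo dotZl !dotZr.
move: Dp_ge0 a01 small; rewrite DpE; have := dot_ge0 (zk - xk).
move: (dot (zk - xk) _) (dot (g xk) _) => dd gd dd_ge0 Dp_ge0 /andP[a_ge0 a_le1] small.
have dd_le : dd <= 2 * beta * - gd by lra.
have gd_le0 : gd <= 0 by nra.
have : L / 2 * (a * (a * dd)) <= a * (a * (beta * L)) * - gd.
  have -> : a * (a * (beta * L)) * - gd = L / 2 * (a * (a * (2 * beta * - gd))) by field.
  by rewrite ler_pM2l ?divr_gt0 // ler_wpM2l // ler_wpM2l.
have : 0 <= (1 - eta - a * (beta * L)) * (a * - gd).
  by rewrite mulr_ge0 ?subr_ge0 ?mulr_ge0 ?oppr_ge0.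
lra.
Qed.

Lemma backtracking_step_ge eta alpha beta theta xk zk (i : nat) :
  0 < alpha <= 1 -> 0 < beta -> 0 < theta < 1 -> Om xk -> Om zk ->
  0 <= Dp g beta xk zk ->
  (forall j, (j < i)%N -> ~ armijo f g eta xk (zk - xk) (theta ^+ j * alpha)) ->
  Num.min alpha (theta * (1 - eta) / (beta * L)) <= theta ^+ i * alpha.
Proof.
move=> alpha01 beta_gt0 theta01 Oxk Ozk Dp_ge0.
case: i => [|j fails]; first by rewrite expr0 mul1r ge_min lexx.
have /andP[step_gt0 step_le1] := backtracking_step_in01 j alpha01 theta01.
have large : 1 - eta < theta ^+ j * alpha * (beta * L).
  rewrite ltNge; apply/negP => small; apply: (fails j (ltnSn j)).
  by apply: (armijo_small_step (beta := beta)); rewrite // ltW.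
have theta_gt0 : 0 < theta by case/andP: theta01.
rewrite ge_min ler_pdivrMr ?mulr_gt0 // exprS -mulrA -mulrA ler_pM2l //.
by apply/orP; right; exact: ltW.
Qed.

Lemma IGPM_noLS_sufficient_decrease beta gamma om x z u :
  IGPM_noLS Om g L beta gamma om x z u -> exists2 C, 0 < C &
    forall k, Om (x k) /\ C * Dp g beta (x k) (z k) <= f (x k) - f (x k.+1).
Proof.
move=> [/andP[beta_gt0 beta_le] [Ox0 step]].
have Ox k : Om (x k) by elim: k => // k _; have [[Ozk _] ->] := step k.
exists beta^-1; first by rewrite invr_gt0.
move=> k; have [[Ozk _] ->] := step k; split => //.
exact: full_step_decrease.
Qed.

Lemma IGPM_LS_sufficient_decrease eta alpha beta theta gamma om x z u :
  IGPM_LS Om f g eta alpha beta theta gamma om x z u -> exists2 C, 0 < C &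
    forall k, Om (x k) /\ C * Dp g beta (x k) (z k) <= f (x k) - f (x k.+1).
Proof.
move=> [/andP[eta_gt0 eta_lt1] [alpha01 [beta_gt0 [theta01 [Ox0 step]]]]].
have Ox k : Om (x k).
  elim: k => // k Oxk; have [[Ozk _] [i [_ [_ ->]]]] := step k.
  have /andP[step_gt0 step_le1] := backtracking_step_in01 i alpha01 theta01.
  by apply: (convex_set_segment convOm Oxk Ozk); rewrite ltW.
pose c := Num.min alpha (theta * (1 - eta) / (beta * L)).
have c_gt0 : 0 < c.
  case/andP: alpha01 => alpha_gt0 _; case/andP: theta01 => theta_gt0 _.
  by rewrite lt_min alpha_gt0 divr_gt0 ?mulr_gt0 ?subr_gt0.
exists (eta * c / beta); first by rewrite !mulr_gt0 ?invr_gt0.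
move=> k; split => //; have [inexact [i [armijo_i [fails ->]]]] := step k.
have Dp_ge0 := inexact_proj_Dp_ge0 (Ox k) inexact.
apply: armijo_decrease => //; rewrite ltW //=.
exact: backtracking_step_ge alpha01 beta_gt0 theta01 (Ox k) inexact.1 Dp_ge0 fails.
Qed.

End SmoothObjective.

Theorem theorem3p6 (R : realType) (n : nat) (Om : set 'rV[R]_n)
  (f : 'rV[R]_n -> R) (g : 'rV[R]_n -> 'rV[R]_n) (fbar L beta gamma : R)
  (eta alpha theta : R) (om : nat -> R) (x z u : nat -> 'rV[R]_n) :
  Om !=set0 -> closed Om -> convex_set Om ->
  (forall y, Om y -> differentiable f y /\ forall v, 'd f y v = dot (g y) v) ->
  (forall y, Om y -> fbar <= f y) ->
  0 < L ->
  (forall y y', Om y -> Om y' -> norm2 (g y - g y') <= L * norm2 (y - y')) ->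
  (forall k, 0 <= om k) ->
  (\sum_(0 <= k <oo) (om k)%:E < +oo)%E ->
  0 < gamma < 1 ->
  IGPM_noLS Om g L beta gamma om x z u \/
  IGPM_LS Om f g eta alpha beta theta gamma om x z u ->
  (fun k => Eres Om g beta (x k)) @ \oo --> 0.
Proof.
move=> Om0 closedOm convOm grad_f f_ge L_gt0 lipschitz_g om_ge0 om_summable
  /andP[gamma_gt0 _] igpm.
have inexact k : inexact_proj Om g beta gamma (om k) (x k) (z k) (u k).
  by case: igpm => [[_ [_ step]] | [_ [_ [_ [_ [_ step]]]]]]; case: (step k).
have [C C_gt0 decrease] : exists2 C, 0 < C &
    forall k, Om (x k) /\ C * Dp g beta (x k) (z k) <= f (x k) - f (x k.+1).
  case: igpm => igpm.
  - exact: (IGPM_noLS_sufficient_decrease convOm grad_f lipschitz_g L_gt0 igpm).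
  - exact: (IGPM_LS_sufficient_decrease convOm grad_f lipschitz_g L_gt0 igpm).
have Dp_ge0 k := inexact_proj_Dp_ge0 (decrease k).1 (inexact k).
have Dp_cvg0 := cvg0_of_telescoping_bound Dp_ge0 C_gt0
  (fun k => (decrease k).2) (fun k => f_ge _ (decrease k).1).
have om_cvg0 := cvg0_of_nneseries_lt_pinfty om_ge0 om_summable.
apply: (@squeeze_cvgr _ _ _ _ (fun=> 0) (fun k => 2 / gamma * (Dp g beta (x k) (z k) + om k))).
- apply: nearW => k; rewrite /Eres sqr_ge0 /=.
  exact: Eres_le_Dp (decrease k).1 (inexact k).
- exact: cvg_cst.
- rewrite [X in _ --> X](_ : 0 = 2 / gamma * (0 + 0)); last by rewrite addr0 mulr0.
  exact: cvgMl_tmp (cvgD Dp_cvg0 om_cvg0).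
Qed.
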